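(* Let $W=x_1^{a_1}x_2+x_2^{a_2}x_3+\dots+x_{N-1}^{a_{N-1}}x_N+x_N^{a_N}$ be a chain with all $a_i\ge2$ and $a_N>2$. For $1\le i\le N$ and an integer $c\in[-2,2]$ put $Y_{i,c}=q_i+c\,\rho^{(i)}_N$. Then $Y_{i,c}\in(0,1)$ except in the following cases: $Y_{N,-2}\in(-1,0)$; $Y_{N,-1}=0$; and, when $a_N=3$, $Y_{N-1,2}=0$ and $Y_{N,2}=1$.
   Context: $q_i$ is the weight of $x_i$ in $W$ and $\rho^{(i)}_j$ is the $(i,j)$ entry of $E_W^{-1}$, where $E_W$ is the exponent matrix (upper bidiagonal with diagonal $a_1,\dots,a_N$ and superdiagonal entries $1$). Explicitly $\rho^{(i)}_j=(-1)^{j-i}\prod_{k=i}^j a_k^{-1}$ for $j\ge i$, $0$ for $j<i$, and $q_i=\sum_{j=i}^N(-1)^{j-i}\prod_{k=i}^ja_k^{-1}$. *)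

(* Indices are 1-based naturals 1..N; exponents a : nat -> nat. *)
From HB Require Import structures.
From mathcomp Require Import all_boot all_order all_algebra.
Set Implicit Arguments. Unset Strict Implicit. Unset Printing Implicit Defensive.
Import Order.TTheory GRing.Theory Num.Theory.
Local Open Scope ring_scope.

(* rho^{(i)}_j = (i,j) entry of E_W^{-1}:
   (-1)^(j-i) * prod_{k=i}^{j} a_k^{-1} for j >= i, and 0 for j < i. *)
Definition rho (a : nat -> nat) (i j : nat) : rat :=
  if (i <= j)%N then (-1) ^+ (j - i) * \prod_(i <= k < j.+1) ((a k)%:R)^-1
  else 0.

(* q_i = weight of x_i in W = sum_{j=i}^{N} rho^{(i)}_j. *)
Definition qw (a : nat -> nat) (N i : nat) : rat :=
  \sum_(i <= j < N.+1) rho a i j.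

Definition Y (a : nat -> nat) (N i : nat) (c : int) : rat :=
  qw a N i + c%:~R * rho a i N.

From HB Require Import structures.
From mathcomp Require Import all_boot all_order all_algebra.
From mathcomp Require Import zify ring lra.
Set Implicit Arguments.
Unset Strict Implicit.
Unset Printing Implicit Defensive.
Import Order.TTheory GRing.Theory Num.Theory.
Local Open Scope ring_scope.

(* Expanding the first row of E_W^{-1} gives the backward recursion
   Y_i = (1 - Y_{i+1}) / a_i with Y_N = (1 + c) / a_N.  The map y |-> (1 - y) / a
   sends (-1, 1) into (0, 1) as soon as a >= 2, so everything reduces to the
   values at i = N: these lie in (-1, 1) except for Y_{N,2} = 1 when a_N = 3,
   and then Y_{N-1,2} = 0 restarts the recursion one step lower. *)

Lemma rho_diag a i : rho a i i = (a i)%:R^-1.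
Proof. by rewrite /rho leqnn subnn expr0 mul1r big_nat1. Qed.

Lemma rho_recl a i j : (i < j)%N -> rho a i j = - (a i)%:R^-1 * rho a i.+1 j.
Proof.
move=> hij; rewrite /rho hij ltnW // big_ltn; last by rewrite ltnS ltnW.
have -> : (j - i = (j - i.+1).+1)%N by lia.
by rewrite exprS; ring.
Qed.

Lemma qw_recl a N i : (i < N)%N -> qw a N i = (a i)%:R^-1 * (1 - qw a N i.+1).
Proof.
move=> hiN; rewrite /qw big_ltn; last by rewrite ltnS ltnW.
rewrite rho_diag mulrBr mulr1 big_distrr /= -sumrN; congr (_ + _).
by rewrite !big_nat; apply: eq_bigr => j /andP[hij _]; rewrite rho_recl // mulNr.
Qed.

Lemma Y_recl a N i c : (i < N)%N -> Y a N i c = (1 - Y a N i.+1 c) / (a i)%:R.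
Proof. by move=> hiN; rewrite /Y qw_recl // rho_recl //; ring. Qed.

Lemma Y_last a N c : Y a N N c = (1 + c%:~R) / (a N)%:R.
Proof. by rewrite /Y /qw big_nat1 rho_diag; ring. Qed.

Lemma divr_1B_itv (R : realFieldType) (x y : R) :
  2 <= x -> -1 < y < 1 -> 0 < (1 - y) / x < 1.
Proof.
move=> hx /andP[hy1 hy2]; have hx0 : 0 < x by lra.
by rewrite divr_gt0 ?subr_gt0 //= ltr_pdivrMr //; lra.
Qed.

Lemma Y_itv_below a N c M :
  (M <= N)%N -> (forall k, (1 <= k < M)%N -> (2 <= a k)%N) ->
  -1 < Y a N M c < 1 -> forall i, (1 <= i < M)%N -> 0 < Y a N i c < 1.
Proof.
move=> hMN ha hYM i /andP[].
move hn: (M - i.+1)%N => n; elim: n i hn => [|n IHn] i hn hi hiM.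
all: rewrite Y_recl; try lia.
all: apply: divr_1B_itv; first by rewrite (ler_nat _ 2) ha //; lia.
  by rewrite (_ : i.+1 = M) //; lia.
have /andP[hY0 hY1] := IHn i.+1 ltac:(lia) ltac:(lia) ltac:(lia).
by rewrite hY1 andbT; lra.
Qed.

Section LastValues.

Variables (a : nat -> nat) (N : nat).
Hypothesis haN : (2 < a N)%N.

Let haN_rat : 3 <= (a N)%:R :> rat.
Proof. by rewrite (ler_nat _ 3). Qed.

Lemma Y_last_neg2 : -1 < Y a N N (-2) < 0.
Proof.
have hA := haN_rat; have hA0 : 0 < (a N)%:R :> rat by lra.
by rewrite Y_last ltr_pdivlMr // ltr_pdivrMr //=; lra.
Qed.

Lemma Y_last_neg1 : Y a N N (-1) = 0.
Proof. by rewrite Y_last /= addrN mul0r. Qed.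

Lemma Y_last_itv c : -2 <= c <= 2 -> ~ (a N = 3%N /\ c = 2) -> -1 < Y a N N c < 1.
Proof.
move=> hc hc2; have hc_rat : -2 <= (c%:~R : rat) <= 2 by rewrite -[2]/(2%:~R) -mulrNz !ler_int.
have hc_lt : (c%:~R : rat) < 2 \/ 4 <= (a N)%:R :> rat.
  case: (c =P 2) => [ec|nc]; [right | left; rewrite -[2]/(2%:~R) ltr_int; lia].
  by rewrite (ler_nat _ 4); case: (a N =P 3%N) => [eN|]; [case: hc2 | lia].
have hA := haN_rat; have hA0 : 0 < (a N)%:R :> rat by lra.
by rewrite Y_last ltr_pdivlMr // ltr_pdivrMr //; case: hc_lt; lra.
Qed.

Lemma Y_last_gt0 c : 0 <= c -> 0 < Y a N N c.
Proof.
move=> hc; have : 0 <= (c%:~R : rat) by rewrite ler0z.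
have hA := haN_rat.
by rewrite Y_last => h; apply: divr_gt0; lra.
Qed.

Hypothesis haN3 : a N = 3%N.

Lemma Y_last_two : Y a N N 2 = 1.
Proof. by rewrite Y_last haN3 /=; field. Qed.

Lemma Y_pred_last_two : (1 < N)%N -> Y a N N.-1 2 = 0.
Proof.
by move=> hN; rewrite Y_recl ?prednK ?Y_last_two ?subrr ?mul0r //; lia.
Qed.

End LastValues.

Theorem lemma5p3 (N : nat) (a : nat -> nat)
  (hN : (1 <= N)%N)
  (ha : forall k, (1 <= k <= N)%N -> (2 <= a k)%N)
  (haN : (2 < a N)%N) :
  forall (i : nat) (c : int), (1 <= i <= N)%N -> -2 <= c <= 2 ->
    [/\ (i = N /\ c = -2 -> -1 < Y a N i c < 0),
        (i = N /\ c = -1 -> Y a N i c = 0),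
        (a N = 3%N /\ i = N.-1 /\ c = 2 -> Y a N i c = 0),
        (a N = 3%N /\ i = N /\ c = 2 -> Y a N i c = 1) &
        (~ (i = N /\ (c = -2 \/ c = -1)) ->
         ~ (a N = 3%N /\ (i = N.-1 \/ i = N) /\ c = 2) ->
         0 < Y a N i c < 1)].
Proof.
move=> i c /andP[hi hiN] hc.
have ha_below M : (M <= N)%N -> forall k, (1 <= k < M)%N -> (2 <= a k)%N.
  by move=> hMN k /andP[hk hkM]; apply: ha; lia.
split=> [[-> ->] | [-> ->] | [haN3 [ei ->]] | [haN3 [-> ->]] | hneg htwo].
- exact: Y_last_neg2.
- exact: Y_last_neg1.
- by rewrite ei Y_pred_last_two //; lia.
- exact: Y_last_two.
case: (ltngtP i N) hiN => // [hlt _ | hiN _]; last first.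
- have hc2 : ~ (a N = 3%N /\ c = 2) by move=> hc2; apply: htwo; tauto.
  rewrite hiN; have /andP[_ ->] := Y_last_itv haN hc hc2; rewrite andbT Y_last_gt0 //.
  by move: hc hneg; rewrite hiN; lia.
case: (boolP ((a N == 3%N) && (c == 2))) => [/andP[/eqP haN3 /eqP hc2] | hc2].
- apply: (Y_itv_below (leq_pred N) (ha_below _ (leq_pred N))).
    by rewrite hc2 Y_pred_last_two //; lia.
  by rewrite hi /= ltn_neqAle -ltnS prednK // hlt andbT; apply/eqP=> ei; apply: htwo; tauto.
- apply: (Y_itv_below (leqnn N) (ha_below _ (leqnn N))); last by rewrite hi.
  by apply: Y_last_itv => // -[haN3 hc_two]; rewrite haN3 hc_two in hc2.
Qed.
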